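(* Let $s<1$, $r\le0$ and $N\gg1$. The multipliers $\sigma_\pm(\xi_1,\xi_2)$ defined below satisfy, with implicit constants independent of $N$: (1) if $|\xi_1|\gg|\xi_2|$, then $|\sigma_\pm(\xi_1,\xi_2)-m_{1-s,N}(\xi_1)^2|\lesssim \frac{|\xi_2|^2}{|\xi_1|^2}+\frac{1}{|\xi_1|}$; (2) if $|\xi_1|\sim|\xi_2|$, then $|\sigma_\pm(\xi_1,\xi_2)|\lesssim 1$.
   Context: For $q\ge0$ and $N\gg1$, $m_{q,N}\in C^\infty(\mathbb{R}^2)$ is a radial function, non-increasing in $|\xi|$, with $m_{q,N}(\xi)=1$ for $|\xi|<N$ and $m_{q,N}(\xi)=(N/|\xi|)^q$ for $|\xi|>2N$. Write $\xi_{12}=\xi_1+\xi_2$, $m_{1-s,j}=m_{1-s,N}(\xi_j)$, $m_{-r,12}=m_{-r,N}(\xi_{12})$. Define \[ \sigma^Z_\pm(\xi_1,\xi_2):=\frac{|\xi_1|^2m_{1-s,1}^2-|\xi_2|^2m_{1-s,2}^2\pm|\xi_{12}|m_{-r,12}^2}{|\xi_1|^2-|\xi_2|^2\pm|\xi_{12}|},\qquad \sigma^S(\xi_1,\xi_2):=\frac{|\xi_1|^2m_{1-s,1}^2-|\xi_2|^2m_{1-s,2}^2}{|\xi_1|^2-|\xi_2|^2}, \] and $\sigma_\pm(\xi_1,\xi_2):=\sigma^Z_\pm(\xi_1,\xi_2)$ if $\big||\xi_1|^2-|\xi_2|^2\big|>2|\xi_{12}|$, and $\sigma_\pm(\xi_1,\xi_2):=\sigma^S(\xi_1,\xi_2)$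 if $\big||\xi_1|^2-|\xi_2|^2\big|\le2|\xi_{12}|$ (with $\sigma^S$ extended by continuity where $|\xi_1|=|\xi_2|$). The variables $\xi_1,\xi_2$ range over $\mathbb{R}^2$ or over the lattice $\gamma_1^{-1}\mathbb{Z}\times\gamma_2^{-1}\mathbb{Z}$. ''$A\gg B$'' means $A\ge CB$ for a sufficiently large absolute constant $C$; ''$A\sim B$'' means $C^{-1}B\le A\le CB$. *)

From Stdlib Require Import Reals.
From Coquelicot Require Import Coquelicot.
Open Scope R_scope.

Definition vec2 := (R * R)%type.
Definition vnorm (x : vec2) : R := sqrt (fst x ^ 2 + snd x ^ 2).
Definition vadd (x y : vec2) : vec2 := (fst x + fst y, snd x + snd y).

Definition smooth (g : R -> R) : Prop := forall (k : nat) (t : R), ex_derive_n g k t.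

(* Radial profile of m_q: m_q(xi) = g(|xi|), smooth, non-increasing in |xi|,
   = 1 for |xi| < 1 and = |xi|^{-q} for |xi| > 2. *)
Definition is_profile (q : R) (g : R -> R) : Prop :=
  smooth g /\
  (forall t, Rabs t < 1 -> g t = 1) /\
  (forall t, 2 < t -> g t = Rpower t (- q)) /\
  (forall t u, 0 <= t -> t <= u -> g u <= g t).

Definition mqN (g : R -> R) (N : R) (x : vec2) : R := g (vnorm x / N).

Definition sgn (pm : bool) : R := if pm then 1 else -1.

(* sigma^Z_{pm}; g1 is the profile for q = 1-s, g2 for q = -r *)
Definition sigmaZ (pm : bool) (g1 g2 : R -> R) (N : R) (x1 x2 : vec2) : R :=
  let a := vnorm x1 in let b := vnorm x2 in let c := vnorm (vadd x1 x2) in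
  (a ^ 2 * (mqN g1 N x1) ^ 2 - b ^ 2 * (mqN g1 N x2) ^ 2
     + sgn pm * c * (mqN g2 N (vadd x1 x2)) ^ 2)
  / (a ^ 2 - b ^ 2 + sgn pm * c).

(* u |-> u * m_{1-s,N}(sqrt u)^2, whose difference quotient between |xi2|^2 and
   |xi1|^2 is sigma^S; its derivative is the continuous extension at |xi1|=|xi2|. *)
Definition hS (g1 : R -> R) (N : R) (u : R) : R := u * (g1 (sqrt u / N)) ^ 2.

Definition sigmaS (g1 : R -> R) (N : R) (x1 x2 : vec2) : R :=
  let a := vnorm x1 in let b := vnorm x2 in
  if Req_EM_T a b then Derive (hS g1 N) (a ^ 2)
  else (a ^ 2 * (mqN g1 N x1) ^ 2 - b ^ 2 * (mqN g1 N x2) ^ 2) / (a ^ 2 - b ^ 2).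

Definition sigma_pm (pm : bool) (g1 g2 : R -> R) (N : R) (x1 x2 : vec2) : R :=
  let a := vnorm x1 in let b := vnorm x2 in
  if Rlt_dec (2 * vnorm (vadd x1 x2)) (Rabs (a ^ 2 - b ^ 2))
  then sigmaZ pm g1 g2 N x1 x2
  else sigmaS g1 N x1 x2.

(* Put h(u) := u m_{1-s,N}(sqrt u)^2, so that sigma^S is a difference quotient of h and
   h'(u) = G(sqrt u / N), where G(t) = g(t)^2 + t g(t) g'(t) is the profile energy.  G is
   bounded independently of N (it equals (1 - q) g(t)^2 for t > 2), so h is M-Lipschitz
   uniformly in N; this bounds sigma^S, and in the sigma^Z region the denominator exceeds
   half of |xi1|^2 - |xi2|^2, which bounds sigma^Z.  When |xi1| >= 2|xi2|, the numerator
   of sigma^Z - m(xi1)^2 is |xi2|^2 (m(xi1)^2 - m(xi2)^2) +- |xi12| (m(xi12)^2 - m(xi1)^2),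
   of size |xi2|^2 + |xi1|, while the sigma^S region forces |xi1| <= 4. *)

From Stdlib Require Import Reals Lra Psatz.
From Coquelicot Require Import Coquelicot.
Open Scope R_scope.

Lemma Rabs_div_le (n d K : R) :
  0 < Rabs d -> Rabs n <= K * Rabs d -> Rabs (n / d) <= K.
Proof.
  intros Hd H. unfold Rdiv. rewrite Rabs_mult, Rabs_inv.
  apply Rmult_le_reg_r with (Rabs d); [exact Hd |].
  rewrite Rmult_assoc, Rinv_l by lra. lra.
Qed.

Lemma Rabs_sgn (pm : bool) : Rabs (sgn pm) = 1.
Proof. destruct pm; unfold sgn; [apply Rabs_R1 | rewrite Rabs_left; lra]. Qed.

Lemma Rabs_add_unit_mul_ge (D c e : R) :
  0 <= c -> Rabs e = 1 -> Rabs D - c <= Rabs (D + e * c).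
Proof.
  intros Hc He. pose proof (Rabs_triang_inv D (- (e * c))) as H.
  rewrite Rabs_Ropp, Rabs_mult, He, Rmult_1_l, (Rabs_pos_eq c) in H by exact Hc.
  replace (D - - (e * c)) with (D + e * c) in H by ring. lra.
Qed.

Lemma Rabs_perturbed_quotient_le (M h D c e m : R) :
  0 <= M -> 0 <= c -> 2 * c < Rabs D -> Rabs e = 1 -> 0 <= m <= 1 ->
  Rabs h <= M * Rabs D -> Rabs ((h + e * c * m) / (D + e * c)) <= 2 * M + 1.
Proof.
  intros HM Hc HD He Hm Hh.
  pose proof (Rabs_add_unit_mul_ge D c e Hc He) as Hden.
  apply Rabs_div_le; [lra |].
  assert (Hnum : Rabs (h + e * c * m) <= M * Rabs D + c).
  { eapply Rle_trans; [apply Rabs_triang |].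
    rewrite !Rabs_mult, He, (Rabs_pos_eq c), (Rabs_pos_eq m) by lra. nra. }
  nra.
Qed.

(* The numerator of sigma^Z - P is b^2 (P - m2) + e c (m3 - P), of size b^2 + c <= b^2 + 3a/2,
   and the denominator exceeds (a^2 - b^2)/2 >= 3a^2/8. *)
Lemma perturbed_quotient_near (a b c e P m2 m3 : R) :
  0 <= b -> 2 * b <= a -> 0 <= c <= a + b -> 2 * c < a ^ 2 - b ^ 2 -> Rabs e = 1 ->
  0 <= P <= 1 -> 0 <= m2 <= 1 -> 0 <= m3 <= 1 ->
  Rabs ((a ^ 2 * P - b ^ 2 * m2 + e * c * m3) / (a ^ 2 - b ^ 2 + e * c) - P)
    <= 4 * (b ^ 2 / a ^ 2 + / a).
Proof.
  intros Hb Hab Hc HD He HP Hm2 Hm3.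
  assert (Ha : 0 < a) by nra.
  pose proof (Rabs_add_unit_mul_ge (a ^ 2 - b ^ 2) c e (proj1 Hc) He) as Hden.
  rewrite Rabs_pos_eq in Hden by lra.
  assert (Hden0 : a ^ 2 - b ^ 2 + e * c <> 0)
    by (intro E; rewrite E, Rabs_R0 in Hden; lra).
  replace ((a ^ 2 * P - b ^ 2 * m2 + e * c * m3) / (a ^ 2 - b ^ 2 + e * c) - P)
    with ((b ^ 2 * (P - m2) + e * c * (m3 - P)) / (a ^ 2 - b ^ 2 + e * c))
    by (field; exact Hden0).
  apply Rabs_div_le; [lra |].
  assert (Hnum : Rabs (b ^ 2 * (P - m2) + e * c * (m3 - P)) <= b ^ 2 + c).
  { eapply Rle_trans; [apply Rabs_triang |].
    rewrite !Rabs_mult, He, (Rabs_pos_eq c), Rabs_pos_eq by (lra || apply pow2_ge_0).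
    assert (Rabs (P - m2) <= 1) by (apply Rabs_le; lra).
    assert (Rabs (m3 - P) <= 1) by (apply Rabs_le; lra).
    pose proof (Rabs_pos (P - m2)). pose proof (Rabs_pos (m3 - P)). nra. }
  set (u := / a).
  assert (Hau : a * u = 1) by (unfold u; field; lra).
  replace (b ^ 2 / a ^ 2) with (b ^ 2 * u ^ 2) by (unfold u; field; lra).
  assert (Hu : 0 < u) by (unfold u; apply Rinv_0_lt_compat, Ha).
  assert (HK : 4 * (b ^ 2 * u ^ 2 + u) * (3 * a ^ 2 / 8) = 3 / 2 * (b ^ 2 + a)).
  { replace (4 * (b ^ 2 * u ^ 2 + u) * (3 * a ^ 2 / 8))
      with (3 / 2 * (b ^ 2 * (a * u) ^ 2 + (a * u) * a)) by field.
    rewrite Hau. ring. }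
  assert (HK0 : 0 <= 4 * (b ^ 2 * u ^ 2 + u)) by nra.
  assert (4 * (b ^ 2 * u ^ 2 + u) * (3 * a ^ 2 / 8)
          <= 4 * (b ^ 2 * u ^ 2 + u) * Rabs (a ^ 2 - b ^ 2 + e * c))
    by (apply Rmult_le_compat_l; nra).
  nra.
Qed.

Lemma vnorm_nonneg (x : vec2) : 0 <= vnorm x.
Proof. apply sqrt_pos. Qed.

Lemma vnorm_vadd_le (x y : vec2) : vnorm (vadd x y) <= vnorm x + vnorm y.
Proof.
  destruct x as [x1 x2], y as [y1 y2]; unfold vnorm, vadd; simpl fst; simpl snd.
  set (A := x1 ^ 2 + x2 ^ 2); set (B := y1 ^ 2 + y2 ^ 2).
  assert (HA : 0 <= A) by (unfold A; nra). assert (HB : 0 <= B) by (unfold B; nra).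
  assert (Hcs : x1 * y1 + x2 * y2 <= sqrt A * sqrt B).
  { rewrite <- sqrt_mult_alt by exact HA.
    apply Rle_trans with (Rabs (x1 * y1 + x2 * y2)); [apply Rle_abs |].
    rewrite <- sqrt_Rsqr_abs. apply sqrt_le_1_alt. unfold Rsqr, A, B.
    pose proof (pow2_ge_0 (x1 * y2 - x2 * y1)). nra. }
  pose proof (sqrt_pos A). pose proof (sqrt_pos B).
  rewrite <- (sqrt_Rsqr (sqrt A + sqrt B)) by lra.
  apply sqrt_le_1_alt. unfold Rsqr.
  pose proof (sqrt_sqrt A HA). pose proof (sqrt_sqrt B HB).
  unfold A, B in *. nra.
Qed.

Lemma smooth_Derive_bounded (g : R -> R) (a b : R) :
  smooth g -> a <= b -> exists B, forall t, a <= t <= b -> Rabs (Derive g t) <= B.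
Proof.
  intros Hs Hab.
  assert (Hc : forall t, continuity_pt (fun t => Rabs (Derive g t)) t).
  { intro t. apply (continuity_pt_comp (Derive g) Rabs); [| apply Rcontinuity_abs].
    apply continuity_pt_filterlim, (ex_derive_continuous (Derive g)), (Hs 2%nat t). }
  destruct (continuity_ab_maj _ a b Hab (fun t _ => Hc t)) as [tM [HM _]].
  exists (Rabs (Derive g tM)). exact HM.
Qed.

Lemma bounded_Derive_lipschitz (f : R -> R) (M : R) :
  (forall u, ex_derive f u) -> (forall u, Rabs (Derive f u) <= M) ->
  forall x y, Rabs (f x - f y) <= M * Rabs (x - y).
Proof.
  intros Hd HM x y.
  destruct (MVT_gen f y x (Derive f)) as [c [_ Hc]].
  - intros z _. apply Derive_correct, Hd.
  - intros z _. apply continuity_pt_filterlim, (ex_derive_continuous f), Hd.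
  - rewrite Hc, Rabs_mult. apply Rmult_le_compat_r; [apply Rabs_pos | apply HM].
Qed.

Definition profile_energy (g : R -> R) (t : R) : R := g t ^ 2 + t * g t * Derive g t.

(* d/du [u g(sqrt u / N)^2] = G(sqrt u / N): the factor 1 / (2 sqrt u) of the chain rule
   cancels against u = sqrt u * sqrt u. *)
Lemma is_derive_hS (g : R -> R) (N u : R) :
  smooth g -> 0 < N -> 0 < u -> is_derive (hS g N) u (profile_energy g (sqrt u / N)).
Proof.
  intros Hs HN Hu. unfold hS, profile_energy.
  pose proof (sqrt_lt_R0 u Hu) as Hsq.
  assert (Dsq : is_derive (fun v => sqrt v / N) u (/ N * / (2 * sqrt u))).
  { apply is_derive_ext with (fun v => / N * sqrt v); [intro v; apply Rmult_comm |].
    apply is_derive_scal, is_derive_Reals, derivable_pt_lim_sqrt, Hu. }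
  assert (Dg : is_derive (fun v => g (sqrt v / N)) u
                 (/ N * / (2 * sqrt u) * Derive g (sqrt u / N)))
    by (apply (is_derive_comp g); [apply Derive_correct, (Hs 1%nat) | exact Dsq]).
  pose proof (is_derive_mult (fun v => v) _ u _ _ (is_derive_id u)
                (is_derive_pow _ 2 _ _ Dg) Rmult_comm) as D.
  replace (g (sqrt u / N) ^ 2 + sqrt u / N * g (sqrt u / N) * Derive g (sqrt u / N))
    with (plus (mult one (g (sqrt u / N) ^ 2))
            (mult u (INR 2 * (/ N * / (2 * sqrt u) * Derive g (sqrt u / N))
                     * g (sqrt u / N) ^ Nat.pred 2))).
  - exact D.
  - unfold plus, mult, one; simpl.
    assert (Hu2 : sqrt u * sqrt u = u) by (apply sqrt_sqrt; lra).
    set (w := sqrt u) in *. rewrite <- Hu2. field. lra.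
Qed.

Section Profile.

Variables (q : R) (g : R -> R).
Hypothesis Hg : is_profile q g.

Lemma profile_pos_le1 (t : R) : 0 <= t -> 0 < g t <= 1.
Proof.
  destruct Hg as [_ [Hone [Hpow Hmono]]]. intros Ht. split.
  - apply Rlt_le_trans with (g (Rmax t 3)); [| apply Hmono; [lra | apply Rmax_l]].
    rewrite Hpow by (pose proof (Rmax_r t 3); lra). apply exp_pos.
  - rewrite <- (Hone 0) by (rewrite Rabs_R0; lra). apply Hmono; lra.
Qed.

Lemma profile_Derive_large (t : R) : 2 < t -> t * Derive g t = - q * g t.
Proof.
  destruct Hg as [_ [_ [Hpow _]]]. intros Ht.
  assert (E : Derive g t = Derive (fun x => Rpower x (- q)) t).
  { apply Derive_ext_loc. eapply filter_imp; [| exact (open_gt 2 t Ht)].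
    intros x Hx. apply Hpow, Hx. }
  rewrite E, (is_derive_unique _ _ (- q * Rpower t (- q - 1)))
    by (apply is_derive_Reals, derivable_pt_lim_power; lra).
  rewrite Hpow by exact Ht.
  replace (Rpower t (- q)) with (Rpower t (1 + (- q - 1))) by (f_equal; ring).
  rewrite Rpower_plus, Rpower_1 by lra. ring.
Qed.

Lemma profile_energy_bounded :
  exists M, 1 <= M /\ forall t, 0 < t -> Rabs (profile_energy g t) <= M.
Proof.
  destruct (smooth_Derive_bounded g 0 2 (proj1 Hg)) as [B HB]; [lra |].
  assert (HB0 : 0 <= B) by (eapply Rle_trans; [apply Rabs_pos | apply (HB 0); lra]).
  pose proof (Rabs_pos (1 - q)) as Hq.
  exists (1 + 2 * B + Rabs (1 - q)). split; [lra |].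
  intros t Ht. unfold profile_energy. destruct (profile_pos_le1 t) as [Hg0 Hg1]; [lra |].
  destruct (Rle_lt_dec t 2) as [Hsmall | Hlarge].
  - specialize (HB t ltac:(lra)).
    eapply Rle_trans; [apply Rabs_triang |].
    rewrite !Rabs_mult, <- RPow_abs, (Rabs_pos_eq t), (Rabs_pos_eq (g t)) by lra.
    assert (t * g t * Rabs (Derive g t) <= 2 * B)
      by (apply Rmult_le_compat; [nra | apply Rabs_pos | nra | exact HB]).
    nra.
  - replace (g t ^ 2 + t * g t * Derive g t) with (g t ^ 2 + g t * (t * Derive g t)) by ring.
    rewrite profile_Derive_large by exact Hlarge.
    replace (g t ^ 2 + g t * (- q * g t)) with ((1 - q) * g t ^ 2) by ring.
    rewrite Rabs_mult, (Rabs_pos_eq (g t ^ 2)) by apply pow2_ge_0.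
    assert (g t ^ 2 <= 1) by nra. nra.
Qed.

Lemma hS_small (N u : R) : 0 < N -> u < N ^ 2 -> hS g N u = u.
Proof.
  destruct Hg as [_ [Hone _]]. intros HN Hu. unfold hS. rewrite Hone; [ring |].
  assert (Hsq : sqrt u < N).
  { destruct (Rle_lt_dec u 0); [rewrite sqrt_neg_0 by lra; lra |].
    rewrite <- (sqrt_pow2 N) by lra. apply sqrt_lt_1_alt; lra. }
  rewrite Rabs_pos_eq by (apply Rdiv_le_0_compat; [apply sqrt_pos | exact HN]).
  apply (Rlt_div_l _ _ _ HN). lra.
Qed.

Lemma is_derive_hS_small (N u : R) : 0 < N -> u < N ^ 2 -> is_derive (hS g N) u 1.
Proof.
  intros HN Hu. apply is_derive_ext_loc with (fun v => v); [| apply (@is_derive_id R_AbsRing)].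
  eapply filter_imp; [| exact (open_lt (N ^ 2) u Hu)].
  intros v Hv. symmetry. apply hS_small; assumption.
Qed.

Lemma hS_Derive_bounded :
  exists M, 1 <= M /\ forall N u, 0 < N ->
    ex_derive (hS g N) u /\ Rabs (Derive (hS g N) u) <= M.
Proof.
  destruct profile_energy_bounded as [M [HM1 HM]]. exists M. split; [exact HM1 |].
  intros N u HN. destruct (Rlt_le_dec u (N ^ 2)) as [Hu | Hu].
  - pose proof (is_derive_hS_small N u HN Hu) as D.
    split; [eexists; exact D |]. rewrite (is_derive_unique _ _ _ D), Rabs_R1. exact HM1.
  - assert (Hu0 : 0 < u) by (pose proof (pow_lt N 2 HN); lra).
    pose proof (is_derive_hS g N u (proj1 Hg) HN Hu0) as D.
    split; [eexists; exact D |]. rewrite (is_derive_unique _ _ _ D).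
    apply HM, Rdiv_lt_0_compat; [apply sqrt_lt_R0, Hu0 | exact HN].
Qed.

End Profile.

Lemma hS_vnorm (g : R -> R) (N : R) (x : vec2) :
  hS g N (vnorm x ^ 2) = vnorm x ^ 2 * mqN g N x ^ 2.
Proof. unfold hS, mqN. rewrite sqrt_pow2 by apply vnorm_nonneg. reflexivity. Qed.

Lemma mqN_sq_bounds (q : R) (g : R -> R) (N : R) (x : vec2) :
  is_profile q g -> 0 < N -> 0 < mqN g N x ^ 2 <= 1.
Proof.
  intros Hg HN. unfold mqN.
  destruct (profile_pos_le1 q g Hg (vnorm x / N)) as [H0 H1].
  - apply Rdiv_le_0_compat; [apply vnorm_nonneg | exact HN].
  - split; [apply pow_lt, H0 | nra].
Qed.

Section Multipliers.

Variables (q1 q2 M N : R) (g1 g2 : R -> R).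
Hypotheses (Hg1 : is_profile q1 g1) (Hg2 : is_profile q2 g2) (HN : 0 < N).
Hypothesis hS_Derive_le : forall u, ex_derive (hS g1 N) u /\ Rabs (Derive (hS g1 N) u) <= M.

Let M_nonneg : 0 <= M.
Proof. eapply Rle_trans; [apply Rabs_pos | apply (hS_Derive_le 0)]. Qed.

Let hS_lipschitz : forall x y, Rabs (hS g1 N x - hS g1 N y) <= M * Rabs (x - y).
Proof.
  apply bounded_Derive_lipschitz; intro u; apply hS_Derive_le.
Qed.

Lemma sigmaS_bounded (x1 x2 : vec2) : Rabs (sigmaS g1 N x1 x2) <= M.
Proof.
  unfold sigmaS; cbv zeta. destruct (Req_EM_T _ _) as [_ | Hne]; [apply hS_Derive_le |].
  rewrite <- !hS_vnorm. apply Rabs_div_le; [| apply hS_lipschitz].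
  apply Rabs_pos_lt. intro E. apply Hne.
  apply Rsqr_inj; [apply vnorm_nonneg | apply vnorm_nonneg |].
  rewrite !Rsqr_pow2. lra.
Qed.

Lemma sigma_pm_bounded (pm : bool) (x1 x2 : vec2) :
  Rabs (sigma_pm pm g1 g2 N x1 x2) <= 2 * M + 1.
Proof.
  unfold sigma_pm; cbv zeta. destruct (Rlt_dec _ _) as [HZ | _].
  - unfold sigmaZ; cbv zeta. rewrite <- !hS_vnorm.
    pose proof (mqN_sq_bounds q2 g2 N (vadd x1 x2) Hg2 HN).
    apply Rabs_perturbed_quotient_le;
      [exact M_nonneg | apply vnorm_nonneg | exact HZ | apply Rabs_sgn | lra |
       apply hS_lipschitz].
  - pose proof (sigmaS_bounded x1 x2). lra.
Qed.

Lemma sigmaS_near_mqN_sq (x1 x2 : vec2) :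
  2 * vnorm x2 <= vnorm x1 ->
  Rabs (vnorm x1 ^ 2 - vnorm x2 ^ 2) <= 2 * vnorm (vadd x1 x2) ->
  Rabs (sigmaS g1 N x1 x2 - mqN g1 N x1 ^ 2)
    <= 4 * (M + 1) * (vnorm x2 ^ 2 / vnorm x1 ^ 2 + / vnorm x1).
Proof.
  intros Hab HS.
  pose proof (vnorm_nonneg x1) as Ha. pose proof (vnorm_nonneg x2) as Hb.
  pose proof (vnorm_vadd_le x1 x2) as Hc.
  destruct (Req_dec (vnorm x1) 0) as [Ha0 | Ha0].
  - assert (Hb0 : vnorm x2 = 0) by lra.
    assert (Hm : mqN g1 N x1 = 1).
    { unfold mqN. rewrite Ha0. apply Hg1. unfold Rdiv. rewrite Rmult_0_l, Rabs_R0. lra. }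
    unfold sigmaS; cbv zeta. rewrite Hm, Ha0, Hb0.
    destruct (Req_EM_T 0 0) as [_ | E]; [| lra].
    replace (0 ^ 2) with 0 by ring.
    rewrite (is_derive_unique _ _ _ (is_derive_hS_small q1 g1 Hg1 N 0 HN (pow_lt N 2 HN))).
    unfold Rdiv. rewrite Rinv_0. replace (1 - 1 ^ 2) with 0 by ring. rewrite Rabs_R0. lra.
  - (* in the sigma^S region 3 a^2 / 4 <= a^2 - b^2 <= 2 c <= 3 a, so a <= 4 *)
    assert (Ha4 : vnorm x1 <= 4).
    { rewrite Rabs_pos_eq in HS by nra. nra. }
    pose proof (sigmaS_bounded x1 x2).
    pose proof (mqN_sq_bounds q1 g1 N x1 Hg1 HN).
    assert (Hinv : / 4 <= / vnorm x1) by (apply Rinv_le_contravar; lra).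
    assert (0 <= vnorm x2 ^ 2 / vnorm x1 ^ 2)
      by (apply Rdiv_le_0_compat; [apply pow2_ge_0 | apply pow_lt; lra]).
    assert (Rabs (sigmaS g1 N x1 x2 - mqN g1 N x1 ^ 2) <= M + 1).
    { eapply Rle_trans; [apply Rabs_triang |].
      rewrite Rabs_Ropp, (Rabs_pos_eq (mqN g1 N x1 ^ 2)); lra. }
    pose proof M_nonneg. nra.
Qed.

Lemma sigma_pm_near_mqN_sq (pm : bool) (x1 x2 : vec2) :
  2 * vnorm x2 <= vnorm x1 ->
  Rabs (sigma_pm pm g1 g2 N x1 x2 - mqN g1 N x1 ^ 2)
    <= 4 * (M + 1) * (vnorm x2 ^ 2 / vnorm x1 ^ 2 + / vnorm x1).
Proof.
  intros Hab. unfold sigma_pm; cbv zeta.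
  destruct (Rlt_dec _ _) as [HZ | HS]; [| apply sigmaS_near_mqN_sq, Rnot_lt_le; assumption].
  pose proof (vnorm_nonneg x1) as Ha. pose proof (vnorm_nonneg x2) as Hb.
  pose proof (vnorm_vadd_le x1 x2) as Hc. pose proof (vnorm_nonneg (vadd x1 x2)) as Hc0.
  rewrite Rabs_pos_eq in HZ by nra.
  assert (Ha0 : 0 < vnorm x1) by nra.
  pose proof (mqN_sq_bounds q1 g1 N x1 Hg1 HN).
  pose proof (mqN_sq_bounds q1 g1 N x2 Hg1 HN).
  pose proof (mqN_sq_bounds q2 g2 N (vadd x1 x2) Hg2 HN).
  eapply Rle_trans.
  - apply perturbed_quotient_near; try apply Rabs_sgn; lra.
  - assert (0 <= vnorm x2 ^ 2 / vnorm x1 ^ 2 + / vnorm x1).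
    { apply Rplus_le_le_0_compat; [| left; apply Rinv_0_lt_compat, Ha0].
      apply Rdiv_le_0_compat; [apply pow2_ge_0 | apply pow_lt, Ha0]. }
    pose proof M_nonneg. nra.
Qed.

End Multipliers.

Theorem lemma3p1 (s r : R) (g1 g2 : R -> R) :
  s < 1 -> r <= 0 -> is_profile (1 - s) g1 -> is_profile (- r) g2 ->
  (exists C0 N0 C : R, 0 < C0 /\ 0 < C /\
     forall (N : R) (pm : bool) (x1 x2 : vec2),
       N0 <= N -> C0 * vnorm x2 <= vnorm x1 ->
       Rabs (sigma_pm pm g1 g2 N x1 x2 - (mqN g1 N x1) ^ 2)
         <= C * (vnorm x2 ^ 2 / vnorm x1 ^ 2 + / vnorm x1))
  /\
  (forall K : R, 1 <= K ->
     exists N0 C : R,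
       forall (N : R) (pm : bool) (x1 x2 : vec2),
         N0 <= N -> vnorm x1 <= K * vnorm x2 -> vnorm x2 <= K * vnorm x1 ->
         Rabs (sigma_pm pm g1 g2 N x1 x2) <= C).
Proof.
  intros _ _ Hg1 Hg2.
  destruct (hS_Derive_bounded (1 - s) g1 Hg1) as [M [HM1 HM]].
  split.
  - exists 2, 1, (4 * (M + 1)). split; [lra | split; [lra |]].
    intros N pm x1 x2 HN Hab.
    apply (sigma_pm_near_mqN_sq (1 - s) (- r) M N); [assumption .. | lra | | exact Hab].
    intro u; apply HM; lra.
  - intros K _. exists 1, (2 * M + 1).
    intros N pm x1 x2 HN _ _.
    apply (sigma_pm_bounded (- r) M N); [assumption .. | lra |].
    intro u; apply HM; lra.
Qed.
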